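(* Let $(E\to M,\rho,\langle\cdot,\cdot\rangle,\circ)$ be a Courant algebroid and $(\mathbf I,\mathbf J,\mathbf K)$ an almost hypercomplex structure on $E$. The following are equivalent: (i) $N_{\mathbf I,\mathbf I}=N_{\mathbf J,\mathbf J}=0$; (ii) $N_{\mathbf I,\mathbf J}=0$; (iii) $N_{\mathbf I,\mathbf I}=N_{\mathbf J,\mathbf J}=N_{\mathbf K,\mathbf K}=N_{\mathbf I,\mathbf J}=N_{\mathbf J,\mathbf K}=N_{\mathbf K,\mathbf I}=0$.
   Context: A Courant algebroid $(E\to M,\rho,\langle\cdot,\cdot\rangle,\circ)$ consists of a real vector bundle $E\to M$ over a smooth manifold, a nondegenerate symmetric fiberwise bilinear pairing $\langle\cdot,\cdot\rangle$ on $E$, a vector bundle map $\rho:E\to TM$ (the anchor), and an $\mathbb R$-bilinear operation $\circ$ on $\Gamma(E)$ (the Dorfman bracket) such that for all $f\in C^\infty(M)$, $x,y,z\in\Gamma(E)$: $x\circ(y\circ z)=(x\circ y)\circ z+y\circ(x\circ z)$; $\rho(x\circ y)=[\rho(x),\rho(y)]$; $x\circ(fy)=(\rho(x)f)y+f(x\circ y)$; $x\circ y+y\circ x=2D\langle x,y\rangle$; $(Df)\circ x=0$; $\rho(x)\langle y,z\rangle=\langle x\circ y,z\rangle+\langle y,x\circ z\rangle$. Here $D:C^\infty(M)\to\Gamma(E)$ is the $\mathbb R$-linear map defined by $\langle Df,x\rangle=\tfrac12\rho(x)f$. For vector bundle endomorphisms $F,G$ of $E$ (over $\mathrm{id}_M$),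 the Nijenhuis concomitant is the tensor $N_{F,G}:E\otimes E\to E$ given by $N_{F,G}(X,Y)=FX\circ GY-F(X\circ GY)-G(FX\circ Y)+FG(X\circ Y)+GX\circ FY-G(X\circ FY)-F(GX\circ Y)+GF(X\circ Y)$. An almost hypercomplex structure on $E$ is a triple $(\mathbf I,\mathbf J,\mathbf K)$ of vector bundle endomorphisms of $E$ over $\mathrm{id}_M$, each orthogonal for $\langle\cdot,\cdot\rangle$, with $\mathbf I^2=\mathbf J^2=\mathbf K^2=\mathbf I\mathbf J\mathbf K=-1$. *)

(* Algebraic model of a Courant algebroid on sections:
   R  : the real scalars (generalized to any realFieldType),
   A  : the commutative R-algebra of smooth functions C^oo(M),
   V  : the A-module Gamma(E) of sections,
   endomorphisms of E over id_M  =  A-linear maps V -> V. *)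
From HB Require Import structures.
From mathcomp Require Import all_boot all_order all_algebra.
Set Implicit Arguments. Unset Strict Implicit. Unset Printing Implicit Defensive.
Import Order.TTheory GRing.Theory Num.Theory.
Local Open Scope ring_scope.

Section Courant.
Variables (R : realFieldType) (A : comAlgType R) (V : lmodType A).

(* an R-linear derivation of A, i.e. a vector field acting on functions *)
Definition derivation (d : A -> A) : Prop :=
  [/\ forall f g, d (f + g) = d f + d g,
      forall (r : R) f, d (r *: f) = r *: d f
    & forall f g, d (f * g) = f * d g + d f * g].

Definition anchor_ok (rho : V -> A -> A) : Prop :=
  (forall x, derivation (rho x)) /\
  (forall (a : A) x y f, rho (a *: x + y) f = a * rho x f + rho y f).

Definition pairing_ok (pair : V -> V -> A) : Prop :=
  [/\ forall x y, pair x y = pair y x,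
      forall (a : A) x y z, pair (a *: x + y) z = a * pair x z + pair y z,
      forall x, (forall y, pair x y = 0) -> x = 0
    & forall phi : V -> A,
        (forall (a : A) y z, phi (a *: y + z) = a * phi y + phi z) ->
        exists x, forall y, phi y = pair x y].

Definition bracket_Rbilinear (circ : V -> V -> V) : Prop :=
  [/\ forall x y z, circ (x + y) z = circ x z + circ y z,
      forall x y z, circ x (y + z) = circ x y + circ x z,
      forall (r : R) x y, circ ((r%:A : A) *: x) y = (r%:A : A) *: circ x y
    & forall (r : R) x y, circ x ((r%:A : A) *: y) = (r%:A : A) *: circ x y].

Definition courant_algebroid (rho : V -> A -> A) (pair : V -> V -> A)
  (circ : V -> V -> V) (D : A -> V) : Prop :=
  [/\ anchor_ok rho, pairing_ok pair, bracket_Rbilinear circ,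
      forall f x, pair (D f) x = (2%:R^-1 : R) *: rho x f &
      [/\ forall x y z, circ x (circ y z) = circ (circ x y) z + circ y (circ x z),
          forall x y f, rho (circ x y) f = rho x (rho y f) - rho y (rho x f),
          forall x (f : A) y, circ x (f *: y) = rho x f *: y + f *: circ x y,
          forall x y, circ x y + circ y x = (2%:R : A) *: D (pair x y) /\
          forall f x, circ (D f) x = 0
        & forall x y z, rho x (pair y z) = pair (circ x y) z + pair y (circ x z)]].

Definition nijenhuis (circ : V -> V -> V) (F G : V -> V) (X Y : V) : V :=
  circ (F X) (G Y) - F (circ X (G Y)) - G (circ (F X) Y) + F (G (circ X Y))
  + circ (G X) (F Y) - G (circ X (F Y)) - F (circ (G X) Y) + G (F (circ X Y)).

Definition nijenhuis_zero (circ : V -> V -> V) (F G : V -> V) : Prop :=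
  forall X Y, nijenhuis circ F G X Y = 0.

Definition orthogonal (pair : V -> V -> A) (F : V -> V) : Prop :=
  forall x y, pair (F x) (F y) = pair x y.

Definition almost_hypercomplex (pair : V -> V -> A) (I J K : {linear V -> V}) : Prop :=
  [/\ orthogonal pair I, orthogonal pair J, orthogonal pair K &
      [/\ forall x, I (I x) = - x, forall x, J (J x) = - x, forall x, K (K x) = - x
        & forall x, I (J (K x)) = - x]].

End Courant.

From mathcomp Require Import all_boot all_algebra.
Import GRing.Theory.
Local Open Scope ring_scope.

(* Only two features of the Courant algebroid enter the proof: the Dorfman
   bracket is biadditive, and 4 is invertible in C^oo(M).  The argument is
   carried out for an arbitrary "quaternionic triple" (F, G, H) of additive
   maps: F^2 = G^2 = -1, FG = H = -GF.  For such a triple, the Nijenhuis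
   concomitants satisfy the linear identities
     4 N_{F,G}(x,y) = combination of terms P N_{F,F}(Qx,Sy), P N_{G,G}(Qx,Sy),
       N_{F,F}(x,y) = combination of terms P N_{F,G}(Qx,Sy),
       N_{G,G}(x,y) = combination of terms P N_{F,G}(Qx,Sy),
       N_{G,H}(x,y) = G N_{F,G}(Gx,Gy),
   with P, Q, S in {1, F, G, H}.  Expanding both sides, every term has the
   shape +-P(Qx o Sy), so each identity is an identity between integer
   coefficient vectors indexed by such "atoms"; these are checked by
   computation, and the expansion of a Nijenhuis concomitant into atoms is
   proved once and for all.  An almost hypercomplex structure gives three
   quaternionic triples (I,J,K), (J,K,I), (K,I,J); the theorem follows by
   applying the four identities to them. *)

(* The basis 1, F, G, H = FG of the quaternions: (a, b) stands for F^a G^b. *)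
Definition qbasis := (bool * bool)%type.
Notation q1 := (false, false).
Notation qF := (true, false).
Notation qG := (false, true).
Notation qH := (true, true).

(* F^a G^b F^c G^d = (-1)^(bc + ac + bd) F^(a+c) G^(b+d), using GF = -FG and
   F^2 = G^2 = -1: the product is qsign u w times the basis element qmul u w. *)
Definition qmul (u w : qbasis) : qbasis := (u.1 (+) w.1, u.2 (+) w.2).
Definition qsign (u w : qbasis) : bool :=
  [&& u.2 & w.1] (+) [&& u.1 & w.1] (+) [&& u.2 & w.2].

(* An atom (P, Q, S) stands for the expression P (Qx o Sy); a symbol is an
   integer combination of atoms, and mono b t is the atom t with sign (-1)^b. *)
Definition atom := (qbasis * qbasis * qbasis)%type.
Definition symbol := atom -> int.
Definition mono (b : bool) (t : atom) : symbol :=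
  fun t' => if t' == t then (-1) ^+ b else 0.

(* The symbol of O N_{P,Q}(Sx, Ty): nij_half P Q collects the four terms
   PSx o QTy - P(Sx o QTy) - Q(PSx o Ty) + PQ(Sx o Ty), after O is applied and
   all products of basis elements are reduced.  The symbol is locked so that
   rewriting does not unfold it into its eight monomials. *)
Definition nij_half (P Q O S T : qbasis) : symbol :=
  mono (qsign P S (+) qsign Q T) (O, qmul P S, qmul Q T)
  \- mono (qsign O P (+) qsign Q T) (qmul O P, S, qmul Q T)
  \- mono (qsign O Q (+) qsign P S) (qmul O Q, qmul P S, T)
  \+ mono (qsign P Q (+) qsign O (qmul P Q)) (qmul O (qmul P Q), S, T).

Fact nij_sym_key : unit. Proof. by []. Qed.
Definition nij_sym : qbasis -> qbasis -> qbasis -> qbasis -> qbasis -> symbol :=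
  locked_with nij_sym_key
    (fun P Q O S T => nij_half P Q O S T \+ nij_half Q P O S T).
Canonical nij_sym_unlockable := [unlockable fun nij_sym].

(* Reading nij_sym P Q O S T as O N_{P,Q}(Sx, Ty):
     N_{F,F}(x,y) = N_{F,G}(x,Hy) - N_{F,G}(Fx,Gy) + F N_{F,G}(x,Gy)
                    + F N_{F,G}(Fx,Hy). *)
Lemma symbol_FF_in_FG :
  nij_sym qF qF q1 q1 q1 =1
  nij_sym qF qG q1 q1 qH \- nij_sym qF qG q1 qF qG \+ nij_sym qF qG qF q1 qG
  \+ nij_sym qF qG qF qF qH.
Proof. by rewrite unlock; case=> [[[[] []] [[] []]] [[] []]]. Qed.

(* N_{G,G}(x,y) = - N_{F,G}(x,Hy) - N_{F,G}(Gx,Fy) + G N_{F,G}(x,Fy)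
                  - G N_{F,G}(Gx,Hy). *)
Lemma symbol_GG_in_FG :
  nij_sym qG qG q1 q1 q1 =1
  \- nij_sym qF qG q1 q1 qH \- nij_sym qF qG q1 qG qF \+ nij_sym qF qG qG q1 qF
  \- nij_sym qF qG qG qG qH.
Proof. by rewrite unlock; case=> [[[[] []] [[] []]] [[] []]]. Qed.

(* N_{G,H}(x,y) = G N_{F,G}(Gx,Gy). *)
Lemma symbol_GH_in_FG : nij_sym qG qH q1 q1 q1 =1 nij_sym qF qG qG qG qG.
Proof. by rewrite unlock; case=> [[[[] []] [[] []]] [[] []]]. Qed.

(* 4 N_{F,G}(x,y) = - N_{F,F}(x,Hy) - N_{F,F}(Gx,Fy) + G N_{F,F}(x,Fy)
     - G N_{F,F}(Gx,Hy) + N_{G,G}(x,Hy) - N_{G,G}(Fx,Gy) + F N_{G,G}(x,Gy)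
     + F N_{G,G}(Fx,Hy). *)
Lemma symbol_FG_in_FF_GG :
  (fun t => 4 * nij_sym qF qG q1 q1 q1 t) =1
  \- nij_sym qF qF q1 q1 qH \- nij_sym qF qF q1 qG qF \+ nij_sym qF qF qG q1 qF
  \- nij_sym qF qF qG qG qH \+ nij_sym qG qG q1 q1 qH \- nij_sym qG qG q1 qF qG
  \+ nij_sym qG qG qF q1 qG \+ nij_sym qG qG qF qF qH.
Proof. by rewrite unlock; case=> [[[[] []] [[] []]] [[] []]]. Qed.

Definition quaternionic_triple {V : zmodType} (F G H : V -> V) : Prop :=
  [/\ forall v, F (F v) = - v, forall v, G (G v) = - v,
      forall v, F (G v) = H v & forall v, G (F v) = - H v].

(* Modules over an algebra over a field of characteristic 0 are torsion-free;
   this is how the factor 4 is cancelled. *)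
Lemma lmod_mulrz_eq0 (R : numFieldType) (A : lalgType R) (V : lmodType A)
    (v : V) (z : int) : z != 0 -> v *~ z = 0 -> v = 0.
Proof.
move=> z0 vz0; have zR0 : (z%:~R : R) != 0 by rewrite intr_eq0.
have zA : (z%:~R : A) = (z%:~R : R)%:A by rewrite scaler_int.
have -> : v = ((z%:~R : R)^-1)%:A *: (v *~ z).
  by rewrite -scaler_int scalerA zA -scalerAl mul1r scalerA mulVf // !scale1r.
by rewrite vz0 scaler0.
Qed.

Section Symbolic.
Context {R : realFieldType} {A : comAlgType R} {V : lmodType A}.
Context {circ : V -> V -> V} {F G H : {additive V -> V}}.
Hypotheses (circDl : forall x y z, circ (x + y) z = circ x z + circ y z)
           (circDr : forall x y z, circ x (y + z) = circ x y + circ x z).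
Hypothesis qFGH : quaternionic_triple F G H.

Definition act (u : qbasis) : V -> V :=
  match u with
  | (false, false) => fun v => v | (true, false) => F
  | (false, true) => G | (true, true) => H end.

Definition sgn (b : bool) (v : V) : V := if b then - v else v.

Lemma act_mul u w v : act u (act w v) = sgn (qsign u w) (act (qmul u w) v).
Proof.
have [FF GG FG GF] := qFGH.
have FH v' : F (H v') = - G v' by rewrite -FG FF.
have HG v' : H (G v') = - F v' by rewrite -FG GG raddfN.
have GH v' : G (H v') = F v' by rewrite -FG GF HG opprK.
have HF v' : H (F v') = G v' by rewrite -FG GF raddfN FH opprK.
have HH v' : H (H v') = - v' by rewrite -{1}FG GH FF.
by case: u => [[] []]; case: w => [[] []]; rewrite /= ?FF ?GG ?FG ?GF ?FH ?HF ?GH ?HG ?HH.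
Qed.

Lemma sgn_add b c v : sgn b (sgn c v) = sgn (b (+) c) v.
Proof. by case: b; case: c; rewrite /= ?opprK. Qed.

Lemma act_add u v w : act u (v + w) = act u v + act u w.
Proof. by case: u => [[] []]; rewrite /= ?raddfD. Qed.

Lemma act_opp u v : act u (- v) = - act u v.
Proof. by case: u => [[] []]; rewrite /= ?raddfN. Qed.

Lemma act0 u : act u 0 = 0.
Proof. by case: u => [[] []]; rewrite /= ?raddf0. Qed.

Lemma act_sgn u b v : act u (sgn b v) = sgn b (act u v).
Proof. by case: b; rewrite /= ?act_opp. Qed.

Lemma circNl u v : circ (- u) v = - circ u v.
Proof.
have circ0 : circ 0 v = 0 by apply: (addrI (circ 0 v)); rewrite -circDl !addr0.
by apply: (addrI (circ u v)); rewrite -circDl !subrr.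
Qed.

Lemma circNr u v : circ u (- v) = - circ u v.
Proof.
have circ0 : circ u 0 = 0 by apply: (addrI (circ u 0)); rewrite -circDr !addr0.
by apply: (addrI (circ u v)); rewrite -circDr !subrr.
Qed.

Lemma circ_sgnl b u v : circ (sgn b u) v = sgn b (circ u v).
Proof. by case: b; rewrite /= ?circNl. Qed.

Lemma circ_sgnr b u v : circ u (sgn b v) = sgn b (circ u v).
Proof. by case: b; rewrite /= ?circNr. Qed.

Section Evaluation.
Variables x y : V.

Definition ev (t : atom) : V := act t.1.1 (circ (act t.1.2 x) (act t.2 y)).

Definition interp (e : symbol) : V := \sum_t ev t *~ e t.

Lemma interpD e1 e2 : interp (e1 \+ e2) = interp e1 + interp e2.
Proof. by rewrite /interp -big_split; apply: eq_bigr => t _; rewrite mulrzDr. Qed.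

Lemma interpB e1 e2 : interp (e1 \- e2) = interp e1 - interp e2.
Proof. by rewrite /interp -sumrB; apply: eq_bigr => t _; rewrite mulrzBr. Qed.

Lemma interpN e : interp (\- e) = - interp e.
Proof. by rewrite /interp -sumrN; apply: eq_bigr => t _; rewrite mulrNz. Qed.

Lemma interpZ (z : int) e : interp (fun t => z * e t) = interp e *~ z.
Proof. by rewrite /interp mulrz_suml; apply: eq_bigr => t _; rewrite mulrC mulrzA. Qed.

Lemma eq_interp {e1 e2 : symbol} : e1 =1 e2 -> interp e1 = interp e2.
Proof. by move=> e12; apply: eq_bigr => t _; rewrite e12. Qed.

Lemma interp_mono b t : interp (mono b t) = sgn b (ev t).
Proof.
rewrite /interp (bigD1 t) //= big1 => [|t' /negbTE nt't].
  by rewrite /mono eqxx addr0; case: b; rewrite ?mulrN1z.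
by rewrite /mono nt't mulr0z.
Qed.

Lemma shape_bracket O P Q S T :
  act O (circ (act P (act S x)) (act Q (act T y)))
  = sgn (qsign P S (+) qsign Q T) (ev (O, qmul P S, qmul Q T)).
Proof. by rewrite !act_mul circ_sgnl circ_sgnr !act_sgn sgn_add. Qed.

Lemma shape_left O P Q S T :
  act O (act P (circ (act S x) (act Q (act T y))))
  = sgn (qsign O P (+) qsign Q T) (ev (qmul O P, S, qmul Q T)).
Proof. by rewrite !act_mul circ_sgnr !act_sgn sgn_add. Qed.

Lemma shape_right O P Q S T :
  act O (act Q (circ (act P (act S x)) (act T y)))
  = sgn (qsign O Q (+) qsign P S) (ev (qmul O Q, qmul P S, T)).
Proof. by rewrite !act_mul circ_sgnl !act_sgn sgn_add. Qed.

Lemma shape_outer O P Q S T :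
  act O (act P (act Q (circ (act S x) (act T y))))
  = sgn (qsign P Q (+) qsign O (qmul P Q)) (ev (qmul O (qmul P Q), S, T)).
Proof. by rewrite [act P _]act_mul act_sgn act_mul sgn_add. Qed.

Lemma nij_symP P Q O S T :
  act O (nijenhuis circ (act P) (act Q) (act S x) (act T y))
  = interp (nij_sym P Q O S T).
Proof.
rewrite /nijenhuis !(act_add, act_opp) !shape_outer !shape_left !shape_right.
by rewrite !shape_bracket unlock /nij_half !(interpD, interpB, interp_mono) !addrA.
Qed.
End Evaluation.

Lemma nij_sym_zero P Q : nijenhuis_zero circ (act P) (act Q) ->
  forall O S T x y, interp x y (nij_sym P Q O S T) = 0.
Proof. by move=> NPQ O S T x y; rewrite -nij_symP NPQ act0. Qed.

Lemma nij_FF_of_FG : nijenhuis_zero circ F G -> nijenhuis_zero circ F F.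
Proof.
move=> NFG x y; have /= -> := nij_symP x y qF qF q1 q1 q1.
rewrite (eq_interp x y symbol_FF_in_FG) !(interpD, interpB) !(nij_sym_zero qF qG NFG).
by rewrite !(subr0, addr0).
Qed.

Lemma nij_GG_of_FG : nijenhuis_zero circ F G -> nijenhuis_zero circ G G.
Proof.
move=> NFG x y; have /= -> := nij_symP x y qG qG q1 q1 q1.
rewrite (eq_interp x y symbol_GG_in_FG) !(interpD, interpB, interpN) !(nij_sym_zero qF qG NFG).
by rewrite !(subr0, addr0, oppr0).
Qed.

Lemma nij_GH_of_FG : nijenhuis_zero circ F G -> nijenhuis_zero circ G H.
Proof.
move=> NFG x y; have /= -> := nij_symP x y qG qH q1 q1 q1.
by rewrite (eq_interp x y symbol_GH_in_FG) (nij_sym_zero qF qG NFG).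
Qed.

Lemma nij_FG_of_FF_GG :
  nijenhuis_zero circ F F -> nijenhuis_zero circ G G -> nijenhuis_zero circ F G.
Proof.
move=> NFF NGG x y; have /= -> := nij_symP x y qF qG q1 q1 q1.
apply: (@lmod_mulrz_eq0 _ _ _ _ 4) => //.
rewrite -interpZ (eq_interp x y symbol_FG_in_FF_GG) !(interpD, interpB, interpN).
rewrite !(nij_sym_zero qF qF NFF) !(nij_sym_zero qG qG NGG).
by rewrite !(subr0, addr0, oppr0).
Qed.
End Symbolic.

Lemma quaternion_relations (V : zmodType) (I J K : {additive V -> V}) :
  (forall v, I (I v) = - v) -> (forall v, J (J v) = - v) ->
  (forall v, K (K v) = - v) -> (forall v, I (J (K v)) = - v) ->
  [/\ quaternionic_triple I J K, quaternionic_triple J K I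
    & quaternionic_triple K I J].
Proof.
move=> II JJ KK IJK.
have IJ v : I (J v) = K v by apply: oppr_inj; rewrite -[RHS]IJK KK !raddfN.
have JIJ v : J (I (J v)) = I v.
  by apply: oppr_inj; rewrite -[LHS]II !IJ KK raddfN.
have JI v : J (I v) = - K v.
  by have := JIJ (J v); rewrite JJ IJ !raddfN => <-; rewrite opprK.
have JK v : J (K v) = I v by rewrite -IJ JIJ.
have KJ v : K (J v) = - I v by rewrite -IJ JJ raddfN.
have KI v : K (I v) = J v by rewrite -IJ JI raddfN -IJ II opprK.
have IK v : I (K v) = - J v by rewrite -IJ II.
by split; split.
Qed.

Theorem mainTheorem9 (R : realFieldType) (A : comAlgType R) (V : lmodType A)
  (rho : V -> A -> A) (pair : V -> V -> A) (circ : V -> V -> V) (D : A -> V)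
  (I J K : {linear V -> V}) :
  courant_algebroid rho pair circ D ->
  almost_hypercomplex pair I J K ->
  [<-> nijenhuis_zero circ I I /\ nijenhuis_zero circ J J;
       nijenhuis_zero circ I J;
       [/\ nijenhuis_zero circ I I, nijenhuis_zero circ J J,
           nijenhuis_zero circ K K /\ nijenhuis_zero circ I J,
           nijenhuis_zero circ J K & nijenhuis_zero circ K I]].
Proof.
move=> [_ _ [circDl circDr _ _] _ _] [_ _ _ [II JJ KK IJK]].
have [qIJK qJKI qKIJ] := @quaternion_relations V I J K II JJ KK IJK.
tfae=> [[NII NJJ] | NIJ | [NII NJJ [_ NIJ] _ _]].
- exact: (nij_FG_of_FF_GG circDl circDr qIJK NII NJJ).
- have NJK := nij_GH_of_FG circDl circDr qIJK NIJ.
  have NKI := nij_GH_of_FG circDl circDr qJKI NJK.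
  split=> //.
  + exact: (nij_FF_of_FG circDl circDr qIJK NIJ).
  + exact: (nij_GG_of_FG circDl circDr qIJK NIJ).
  + by split=> //; exact: (nij_FF_of_FG circDl circDr qKIJ NKI).
- by split.
Qed.
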